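(* Let $G$ be a complete edge-colored graph, $\ell$ a labeling of $G$, and $u,v,w$ three distinct vertices of $G$ with $\ell(u)<\ell(v)<\ell(w)$. Suppose the edges $\{u,v\}$ and $\{v,w\}$ have the same color and this color differs from the color of $\{u,w\}$. Then there are no permutations $\pi_1,\dots,\pi_k$ such that $(G,\ell)$ is a complete edge-colored permutation graph of $\pi_1,\dots,\pi_k$.
   Context: A complete $k$-edge-colored graph $G=(V,E_1,\dots,E_k)$ is the complete graph on a finite set $V$ whose edges are partitioned into $k$ nonempty color classes $E_i$; $G_{|i}=(V,E_i)$. A labeling is a bijection $\ell:V\to\{1,\dots,|V|\}$. For a permutation $\pi$ of $\{1,\dots,|V|\}$, a graph $(V,E)$ with labeling $\ell$ is a simple permutation graph of $\pi$ if for all $u,v$ with $\ell(u)>\ell(v)$: $\{u,v\}\in E$ iff $\pi^{-1}(\ell(u))<\pi^{-1}(\ell(v))$. $(G,\ell)$ is a complete edge-colored permutation graph of $\pi_1,\dots,\pi_k$ if $(G_{|i},\ell)$ is a simple permutation graph of $\pi_i$ for each $i$. *)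

From mathcomp Require Import all_boot all_fingroup.
Set Implicit Arguments. Unset Strict Implicit. Unset Printing Implicit Defensive.

(* A complete k-edge-colored graph on a finite vertex type V:
   [col u v] is the color (in 'I_k) of the edge {u,v} for u <> v. *)
Record cecg (V : finType) (k : nat) := CECG {
  col : V -> V -> 'I_k;
  col_sym : forall u v, col u v = col v u;
  col_nonempty : forall i : 'I_k, exists u v, u != v /\ col u v = i
}.

(* A labeling: a bijection V -> {1..|V|}; we use 'I_#|V| = {0..|V|-1}
   (shift by one, which preserves the order). *)
Definition labeling (V : finType) (l : V -> 'I_#|V|) := bijective l.

Definition simple_perm_graph (V : finType) (adj : V -> V -> bool)
    (l : V -> 'I_#|V|) (pi : 'S_#|V|) :=
  forall u v : V, l v < l u ->
    (adj u v <-> (pi^-1)%g (l u) < (pi^-1)%g (l v)).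

Definition cecpg (V : finType) (k : nat) (G : cecg V k)
    (l : V -> 'I_#|V|) (pis : 'I_k -> 'S_#|V|) :=
  forall i : 'I_k,
    simple_perm_graph (fun u v => (u != v) && (col G u v == i)) l (pis i).

From mathcomp Require Import all_boot all_fingroup.

Set Implicit Arguments.
Unset Strict Implicit.
Unset Printing Implicit Defensive.

(* With i the color of {u,v} and {v,w}, both edges are inversions of pi_i:
   pi_i^-1 (l w) < pi_i^-1 (l v) < pi_i^-1 (l u).  Inversions compose, so
   {u,w} is an inversion of pi_i as well, i.e. it also has color i. *)

Lemma neq_of_ltn_label (V : finType) (l : V -> 'I_#|V|) (u v : V) :
  l u < l v -> v != u.
Proof. by move=> luv; apply: contraTneq luv => ->; rewrite ltnn. Qed.

Lemma simple_perm_graph_trans (V : finType) (adj : V -> V -> bool)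
    (l : V -> 'I_#|V|) (pi : 'S_#|V|) (u v w : V) :
  simple_perm_graph adj l pi -> l u < l v -> l v < l w ->
  adj v u -> adj w v -> adj w u.
Proof.
move=> Hpi luv lvw /(Hpi _ _ luv) pi_vu /(Hpi _ _ lvw) pi_wv.
by apply/(Hpi _ _ (ltn_trans luv lvw)); exact: ltn_trans pi_wv pi_vu.
Qed.

Lemma cecpg_col_trans (V : finType) (k : nat) (G : cecg V k)
    (l : V -> 'I_#|V|) (pis : 'I_k -> 'S_#|V|) (u v w : V) :
  cecpg G l pis -> l u < l v -> l v < l w ->
  col G u v = col G v w -> col G u w = col G u v.
Proof.
move=> Hpis luv lvw cuvw.
have luw := ltn_trans luv lvw.
have := simple_perm_graph_trans (Hpis (col G u v)) luv lvw.
rewrite (neq_of_ltn_label luv) (neq_of_ltn_label lvw) (neq_of_ltn_label luw) /=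
  (col_sym G v u) (col_sym G w v) (col_sym G w u).
by rewrite -cuvw eqxx => /(_ isT isT) /eqP.
Qed.

Theorem lemma3p9 (V : finType) (k : nat) (G : cecg V k)
    (l : V -> 'I_#|V|) (u v w : V) :
  labeling l ->
  l u < l v -> l v < l w ->
  col G u v = col G v w ->
  col G u v <> col G u w ->
  ~ (exists pis : 'I_k -> 'S_#|V|, cecpg G l pis).
Proof.
move=> _ luv lvw cuvw cuw [pis Hpis].
by apply: cuw; rewrite (cecpg_col_trans Hpis luv lvw cuvw).
Qed.
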